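(* For any family of policies $\Pi$, $\mathrm{PF}(\Pi)\subseteq \mathrm{DUS}(\Pi)$.
   Context: $\Pi$ is a family of policies of a multi-objective sequential decision problem with $d$ objectives; each $\pi\in\Pi$ has a random return vector $\mathbf{Z}^\pi\in\mathbb{R}^d$ (discounted sum of vector rewards) with finite expectation $\mathbf{V}^\pi=\mathbb{E}[\mathbf{Z}^\pi]$. For $\mathbf{x},\mathbf{y}\in\mathbb{R}^d$: $\mathbf{y}\preceq_p\mathbf{x}$ iff $y_i\le x_i$ for all $i$; $\mathbf{x}\succ_p\mathbf{y}$ iff $x_i\ge y_i$ for all $i$ and $x_i>y_i$ for some $i$. CDF: $F_{\mathbf{X}}(\mathbf{x})=P(\mathbf{X}\preceq_p\mathbf{x})$. $\mathbf{X}\succeq_{\mathrm{FSD}}\mathbf{Y}$ iff $F_{\mathbf{X}}\le F_{\mathbf{Y}}$ pointwise; $\mathbf{X}\succ_{\mathrm{FSD}}\mathbf{Y}$ iff additionally strict inequality at some point (same for real random variables). $\mathbf{X}\succ_d\mathbf{Y}$ (distributional dominance) iff $\mathbf{X}\succeq_{\mathrm{FSD}}\mathbf{Y}$ and $X_i\succ_{\mathrm{FSD}}Y_i$ for some marginal $i$. Pareto front: $\mathrm{PF}(\Pi)=\{\pi\in\Pi:\nexists\pi'\in\Pi,\ \mathbf{V}^{\pi'}\succ_p\mathbf{V}^\pi\}$. Distributional undominated set: $\mathrm{DUS}(\Pi)=\{\pi\in\Pi:\nexists\pi'\in\Pi,\ \mathbf{Z}^{\pi'}\succ_d\mathbf{Z}^\pi\}$.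 *)

From HB Require Import structures.
From mathcomp Require Import all_boot all_order all_algebra.
From mathcomp Require Import all_classical all_reals all_analysis.
Set Implicit Arguments. Unset Strict Implicit. Unset Printing Implicit Defensive.
Import Order.TTheory GRing.Theory Num.Theory.
Local Open Scope classical_set_scope.
Local Open Scope ring_scope.

Section MODefs.
Context {R : realType} {d : nat}.

Definition pareto_le (y x : 'I_d -> R) : Prop := forall i, y i <= x i.
Definition pareto_gt (x y : 'I_d -> R) : Prop :=
  (forall i, y i <= x i) /\ (exists i, y i < x i).

Context {dT : measure_display} {T : measurableType dT}.

Definition mcdf (P : probability T R) (X : T -> 'I_d -> R) (x : 'I_d -> R)
  : \bar R := P [set t | pareto_le (X t) x].

Definition rcdf (P : probability T R) (X : T -> R) (r : R) : \bar R :=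
  P [set t | X t <= r].

Definition mfsd_ge P X Q Y : Prop := forall x, (mcdf P X x <= mcdf Q Y x)%E.
Definition rfsd_ge P X Q Y : Prop := forall r, (rcdf P X r <= rcdf Q Y r)%E.
Definition rfsd_gt P X Q Y : Prop :=
  rfsd_ge P X Q Y /\ exists r, (rcdf P X r < rcdf Q Y r)%E.

Definition dist_dom P X Q Y : Prop :=
  mfsd_ge P X Q Y /\
  exists i : 'I_d, rfsd_gt P (fun t => X t i) Q (fun t => Y t i).

(* expected return vector V^pi = E[Z^pi] (componentwise; finite by hypothesis) *)
Definition Vexp (P : probability T R) (X : T -> 'I_d -> R) : 'I_d -> R :=
  fun i => fine ('E_P[fun t => X t i])%E.

Context {Pi : Type} (P : Pi -> probability T R) (Z : Pi -> T -> 'I_d -> R).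

Definition PF : set Pi :=
  [set pi | ~ exists pi', pareto_gt (Vexp (P pi') (Z pi')) (Vexp (P pi) (Z pi))].

Definition DUS : set Pi :=
  [set pi | ~ exists pi', dist_dom (P pi') (Z pi') (P pi) (Z pi)].

End MODefs.

From HB Require Import structures.
From mathcomp Require Import all_boot all_order all_algebra.
From mathcomp Require Import all_classical all_reals all_analysis.
From mathcomp Require Import lra measurable_realfun.
Import Order.TTheory GRing.Theory Num.Theory.
Local Open Scope classical_set_scope.
Local Open Scope ring_scope.

(* If Z^pi' >_d Z^pi, each marginal CDF of Z^pi' lies below that of Z^pi
   (let the other coordinates of the joint CDF tend to +oo).  Writing
   E X = \int_0^oo (1 - F_X) - \int_-oo^0 F_X, this gives V^pi' >= V^pi
   componentwise; on the marginal where F_X(r) < F_Y(r), right continuity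
   keeps the CDFs apart on some [r, r + delta], so that expectation is
   strictly larger, i.e. V^pi' >_p V^pi and pi is not on the Pareto front. *)

Section integral_gap.
Context {d : measure_display} {T : measurableType d} {R : realType}.
Variable mu : {measure set T -> \bar R}.
Local Open Scope ereal_scope.

Lemma ge0_le_integral_gap (D A : set T) (f g : T -> \bar R) (e : R) :
  measurable D -> measurable A -> A `<=` D -> (0 <= e)%R ->
  measurable_fun D f -> measurable_fun D g -> (forall x, D x -> 0 <= g x) ->
  (forall x, D x -> g x <= f x) -> (forall x, A x -> g x + e%:E <= f x) ->
  \int[mu]_(x in D) g x + e%:E * mu A <= \int[mu]_(x in D) f x.
Proof.
move=> mD mA AD e0 mf mg g0 gf gef.
have eA0 x : D x -> 0 <= (e * \1_A x)%:E by rewrite lee_fin mulr_ge0.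
have meA : measurable_fun D (fun x => (e * \1_A x)%:E).
  by apply/measurable_EFinP/measurable_funM => //; exact: measurable_indic.
have -> : e%:E * mu A = \int[mu]_(x in D) (e * \1_A x)%:E.
  rewrite -[in LHS](setIidl AD) -integral_indic //.
  rewrite -ge0_integralZl_EFin //; last exact/measurable_EFinP/measurable_indic.
rewrite -ge0_integralD //; apply: ge0_le_integral => //.
- by move=> x Dx; rewrite adde_ge0 ?g0 ?eA0.
- exact: emeasurable_funD.
- move=> x Dx; rewrite indicE; have [/set_mem Ax|_] := boolP (x \in A).
    by rewrite mulr1 gef.
  by rewrite mulr0 adde0 gf.
Qed.

End integral_gap.

Section cdf_lemmas.
Context {d : measure_display} {T : measurableType d} {R : realType}.
Context {P : probability T R}.
Local Open Scope ereal_scope.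

Lemma cdf_subr (X : {RV P >-> R}) (r s : R) :
  cdf ([mfun of (X \- cst r)%R] : {RV P >-> R}) s = cdf X (s + r).
Proof.
rewrite /cdf /distribution /pushforward; congr (P _).
by apply/seteqP; split => t; rewrite /= !in_itv /= lerBlDr.
Qed.

Lemma rcdf_cdf (X : {RV P >-> R}) r : rcdf P X r = cdf X r.
Proof. by []. Qed.

Lemma cdf_fineE (X : {RV P >-> R}) r : cdf X r = (fine (cdf X r))%:E.
Proof. by rewrite fineK ?fin_num_measure. Qed.

Lemma cdf_lt_near_right {X : {RV P >-> R}} {a c : R} :
  cdf X a < c%:E -> \forall x \near a^'+, cdf X x < c%:E.
Proof.
move=> Xac; have Xa := @cdf_right_continuous _ _ _ _ X a.
rewrite cdf_fineE in Xa; move/fine_cvg in Xa; rewrite cdf_fineE lte_fin in Xac.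
by apply: filterS (cvgr_lt _ Xa c Xac) => x /= Xxc; rewrite cdf_fineE lte_fin.
Qed.

End cdf_lemmas.

Section fsd_expectation.
Context {R : realType} {d d' : measure_display}.
Context {T : measurableType d} {T' : measurableType d'}.
Context {P : probability T R} {Q : probability T' R}.
Context {X : {RV P >-> R}} {Y : {RV Q >-> R}}.
Hypotheses (LX : Lfun P 1 X) (LY : Lfun Q 1 Y).
Hypothesis cdf_le : forall r, (cdf X r <= cdf Y r)%E.
Local Open Scope ereal_scope.

Let AX := \int[lebesgue_measure]_(r in `[0%R, +oo[) ccdf X r.
Let BX := \int[lebesgue_measure]_(r in `]-oo, 0%R[) cdf X r.
Let AY := \int[lebesgue_measure]_(r in `[0%R, +oo[) ccdf Y r.
Let BY := \int[lebesgue_measure]_(r in `]-oo, 0%R[) cdf Y r.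

Let EX : 'E_P[X] = AX - BX. Proof. exact: expectation_cdf_ccdf. Qed.
Let EY : 'E_Q[Y] = AY - BY. Proof. exact: expectation_cdf_ccdf. Qed.

Let AX_BX_fin : AX \is a fin_num /\ BX \is a fin_num.
Proof. by apply/andP; rewrite -fin_numB -EX expectation_fin_num. Qed.
Let AY_BY_fin : AY \is a fin_num /\ BY \is a fin_num.
Proof. by apply/andP; rewrite -fin_numB -EY expectation_fin_num. Qed.

Let BX_le_BY : BX <= BY.
Proof.
by apply: ge0_le_integral => //; exact: measurable_funS (cdf_measurable _).
Qed.

Let AY_le_AX : AY <= AX.
Proof.
apply: ge0_le_integral => //; [exact: measurable_funS (ccdf_measurable _)..|].
by move=> r _; rewrite !ccdf_1_cdf leeB.
Qed.

Lemma fsd_expectation_le : 'E_Q[Y] <= 'E_P[X].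
Proof. by rewrite EX EY leeB. Qed.

Lemma fsd_expectation_lt0 : cdf X 0 < cdf Y 0 -> 'E_Q[Y] < 'E_P[X].
Proof.
rewrite [cdf Y 0]cdf_fineE => XY0.
have [delta [/= delta0 Xdelta]] :=
  filter_ex (filterI (nbhs_right_gt 0%R) (cdf_lt_near_right XY0)).
pose e := (fine (cdf Y 0) - fine (cdf X delta))%R.
have e0 : (0 < e)%R by rewrite subr_gt0 -lte_fin -cdf_fineE.
have AX_gap : AY + (e * delta)%:E <= AX.
  have mu_delta : lebesgue_measure `[0%R, delta] = delta%:E.
    by rewrite lebesgue_measure_itv /= lte_fin delta0 sube0.
  rewrite EFinM -mu_delta; apply: ge0_le_integral_gap => //.
  - by move=> s; rewrite /= !in_itv /= => /andP[->].
  - exact: ltW.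
  - exact: measurable_funS (ccdf_measurable _).
  - exact: measurable_funS (ccdf_measurable _).
  - by move=> s _; rewrite !ccdf_1_cdf leeB.
  move=> s; rewrite /= in_itv /= => /andP[s0 sdelta].
  have Ys : (fine (cdf Y 0) <= fine (cdf Y s))%R.
    by rewrite -lee_fin -!cdf_fineE; exact: cdf_nondecreasing.
  have Xs : (fine (cdf X s) <= fine (cdf X delta))%R.
    by rewrite -lee_fin -!cdf_fineE; exact: cdf_nondecreasing.
  rewrite !ccdf_1_cdf [cdf X s]cdf_fineE [cdf Y s]cdf_fineE.
  by rewrite -!EFinB -EFinD lee_fin /e; lra.
have [AXf BXf] := AX_BX_fin; have [AYf BYf] := AY_BY_fin.
rewrite EX EY; apply: le_lt_trans (leeB (lexx AY) BX_le_BY) _.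
rewrite lteD2rE ?fin_numN //; apply: lt_le_trans AX_gap.
by rewrite lteDl // lte_fin mulr_gt0.
Qed.

End fsd_expectation.

Lemma fsd_expectation_lt {R : realType} {d d' : measure_display}
    {T : measurableType d} {T' : measurableType d'}
    {P : probability T R} {Q : probability T' R}
    {X : {RV P >-> R}} {Y : {RV Q >-> R}} :
  Lfun P 1 X -> Lfun Q 1 Y -> (forall r, cdf X r <= cdf Y r)%E ->
  forall r, (cdf X r < cdf Y r)%E -> ('E_Q[Y] < 'E_P[X])%E.
Proof.
move=> LX LY XY r XYr.
(* Shifting by r moves the gap to 0, where the layer-cake formula splits. *)
pose Xr : {RV P >-> R} := [mfun of (X \- cst r)%R].
pose Yr : {RV Q >-> R} := [mfun of (Y \- cst r)%R].
have LXr : Lfun P 1 Xr by apply: rpredB => //; exact: Lfun_cst.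
have LYr : Lfun Q 1 Yr by apply: rpredB => //; exact: Lfun_cst.
have XYr' s : (cdf Xr s <= cdf Yr s)%E by rewrite !cdf_subr.
have := fsd_expectation_lt0 LXr LYr XYr'; rewrite !cdf_subr add0r => /(_ XYr).
by rewrite !expectationB ?Lfun_cst // !expectation_cst lteD2rE.
Qed.

Section marginal_cdf.
Context {R : realType} {dT : measure_display} {T : measurableType dT} {d : nat}.

Lemma measurable_sublevel (f : T -> R) r :
  measurable_fun setT f -> measurable [set t | f t <= r].
Proof.
move=> mf; have := mf measurableT _ (measurable_itv `]-oo, r]); rewrite setTI.
by congr measurable; apply/seteqP; split => t /=; rewrite in_itv.
Qed.

Context {X : T -> 'I_d -> R}.
Hypothesis mX : forall i, measurable_fun setT (fun t => X t i).

Lemma measurable_pareto_le x : measurable [set t | pareto_le (X t) x].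
Proof.
rewrite (_ : [set t | _] = \bigcap_(i in setT) [set t | X t i <= x i]).
  apply: fin_bigcap_measurable => [|i _]; first exact: finite_finset.
  exact: measurable_sublevel.
by apply/seteqP; split => [t Xx i _|t Xx i]; exact: Xx.
Qed.

Lemma mcdf_cvg_rcdf (P : probability T R) i r :
  mcdf P X (fun j => if j == i then r else n%:R) @[n --> \oo] -->
  rcdf P (fun t => X t i) r.
Proof.
rewrite /mcdf /rcdf.
have -> : [set t | X t i <= r] = \bigcup_n
    [set t | pareto_le (X t) (fun j => if j == i then r else n%:R)].
  apply/seteqP; split => t /=.
  - move=> Xr; exists (Num.truncn (\sum_j `|X t j|)).+1 => // j.
    case: eqP => [->//|_]; apply: le_trans (ltW (truncnS_gt _)).
    apply: le_trans (ler_norm _) _.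
    by rewrite (bigD1 j) //= lerDl sumr_ge0.
  - by move=> [n _ Xn]; have := Xn i; rewrite eqxx.
apply: nondecreasing_cvg_mu => [n||]; first exact: measurable_pareto_le.
- by apply: bigcupT_measurable => n; exact: measurable_pareto_le.
- move=> m n mn; apply/subsetPset => t Xm j.
  by apply: le_trans (Xm j) _; case: eqP => // _; rewrite ler_nat.
Qed.

End marginal_cdf.

Lemma mfsd_ge_rfsd_ge {R : realType} {dT : measure_display}
    {T : measurableType dT} {d : nat} (P Q : probability T R)
    (X Y : T -> 'I_d -> R) :
  (forall i, measurable_fun setT (fun t => X t i)) ->
  (forall i, measurable_fun setT (fun t => Y t i)) ->
  mfsd_ge P X Q Y -> forall i, rfsd_ge P (fun t => X t i) Q (fun t => Y t i).
Proof.
move=> mX mY XY i r.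
apply: lee_cvg_to (mcdf_cvg_rcdf mX P i r) (mcdf_cvg_rcdf mY Q i r) _.
by apply: nearW => n; exact: XY.
Qed.

Lemma dist_dom_pareto_gt {R : realType} {dT : measure_display}
    {T : measurableType dT} {d : nat} (P Q : probability T R)
    (X Y : T -> 'I_d -> R)
    (mX : forall i, measurable_fun setT (fun t => X t i))
    (mY : forall i, measurable_fun setT (fun t => Y t i)) :
  (forall i, P.-integrable setT (fun t => (X t i)%:E)) ->
  (forall i, Q.-integrable setT (fun t => (Y t i)%:E)) ->
  dist_dom P X Q Y -> pareto_gt (Vexp P X) (Vexp Q Y).
Proof.
move=> iX iY [XY [i0 [_ [r XYr]]]].
pose Xi i : {RV P >-> R} := mfun_Sub (mem_set (mX i)).
pose Yi i : {RV Q >-> R} := mfun_Sub (mem_set (mY i)).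
have LX i : Lfun P 1 (Xi i) by apply/Lfun1_integrable; exact: iX.
have LY i : Lfun Q 1 (Yi i) by apply/Lfun1_integrable; exact: iY.
have XYi i s : (cdf (Xi i) s <= cdf (Yi i) s)%E.
  by rewrite -!rcdf_cdf; exact: mfsd_ge_rfsd_ge.
have fX i := expectation_fin_num (LX i).
have fY i := expectation_fin_num (LY i).
have XYr' : (cdf (Xi i0) r < cdf (Yi i0) r)%E by rewrite -!rcdf_cdf.
split=> [i|].
- exact: fine_le (fY i) (fX i) (fsd_expectation_le (LX i) (LY i) (XYi i)).
- exists i0; apply: fine_lt (fY i0) (fX i0) _.
  exact: fsd_expectation_lt (LX i0) (LY i0) (XYi i0) r XYr'.
Qed.

Theorem corollary4p1p1 (R : realType) (d : nat) (dT : measure_display)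
  (T : measurableType dT) (Pi : Type)
  (P : Pi -> probability T R) (Z : Pi -> T -> 'I_d -> R)
  (Zmeas : forall pi i, measurable_fun setT (fun t => Z pi t i))
  (Zint : forall pi i, (P pi).-integrable setT (fun t => (Z pi t i)%:E)) :
  PF P Z `<=` DUS P Z.
Proof.
move=> pi PFpi [pi' dom]; apply: PFpi; exists pi'.
exact: dist_dom_pareto_gt dom.
Qed.
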